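(* Let $f:\{0,1\}^n\to\{0,1\}$, and consider the following algorithm: (1) choose $k\in\{0,1,\dots,\lceil\log n\rceil\}$ uniformly at random and set $\ell:=2^k$; (2) choose $x\in\{0,1\}^n$ uniformly at random; (3) perform an $\ell$-step random walk $p$ on $H_n$ from $x$, ending at $y$; (4) if $f(x)\ne f(y)$, perform binary search on the vertex sequence of $p$ to find an influential edge $(u,v)$ of $p$, and REJECT if $(u,v)$ is a violating edge; (5) otherwise ACCEPT. Then, conditioned on the length chosen in step (1) being $\ell$, the algorithm rejects with probability $\Omega\!\left(\frac{\ell}{n}\cdot\frac{|F_\ell|}{2^n}\right)$, where $F_\ell$ is the set of edges $(x,y)$ of $H_n$ that are violating and such that both $x$ and $y$ are $\ell$-sticky.
   Context: $H_n$ is the undirected hypercube graph on $\{0,1\}^n$ (edges between points at Hamming distance $1$); a random walk step moves to a uniformly random neighbor. The coordinate-wise partial order is $\prec$. An edge $(x,y)$ is influential if $f(x)\ne f(y)$, and violating if $x\prec y$, $f(x)=1$, $f(y)=0$. A vertex $x$ is $\ell$-sticky if an $\ell$-step random walk on $H_n$ starting from $x$ traverses no influential edge with probability at least $1/2$. Binary search on a walk with vertices $x=z_0,\dots,z_\ell=y$ and $f(z_0)\ne f(z_\ell)$ returns some index $i$ with $f(z_i)\ne f(z_{i+1})$. Logarithms are base 2. *)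

From mathcomp Require Import all_boot all_order all_algebra.
Set Implicit Arguments. Unset Strict Implicit. Unset Printing Implicit Defensive.
Import Order.TTheory GRing.Theory Num.Theory.

Definition vertex (n : nat) := {ffun 'I_n -> bool}.

(* The neighbour of x obtained by flipping coordinate i. A uniformly random
   neighbour = flip along a uniformly random coordinate i : 'I_n. *)
Definition flip n (x : vertex n) (i : 'I_n) : vertex n :=
  [ffun j => if j == i then ~~ x j else x j].

Definition walk n (x : vertex n) (ds : seq 'I_n) : seq (vertex n) :=
  x :: scanl (@flip n) x ds.

Definition adjacent n (x y : vertex n) : bool := #|[set i | x i != y i]| == 1.

Definition prec n (x y : vertex n) : bool := [forall i, x i ==> y i] && (x != y).

Definition violating n (f : vertex n -> bool) (x y : vertex n) : bool :=
  [&& prec x y, f x & ~~ f y].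

Definition no_influential n (f : vertex n -> bool) (p : seq (vertex n)) : bool :=
  all (fun zz => f zz.1 == f zz.2) (zip p (behead p)).

Definition sticky n (f : vertex n -> bool) (l : nat) (x : vertex n) : bool :=
  (1 / 2%:R <= (#|[set ds : l.-tuple 'I_n | no_influential f (walk x ds)]|%:R
               / (n ^ l)%:R : rat))%R.

Definition F_set n (f : vertex n -> bool) (l : nat) : {set vertex n * vertex n} :=
  [set e | [&& adjacent e.1 e.2, violating f e.1 e.2, sticky f l e.1 & sticky f l e.2]].

Definition binsearch_spec n (f : vertex n -> bool) (bs : seq (vertex n) -> nat) :=
  forall (z : vertex n) (s : seq (vertex n)), f z != f (last z s) ->
    bs (z :: s) < size s /\ f (nth z (z :: s) (bs (z :: s))) != f (nth z (z :: s) (bs (z :: s)).+1).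

Definition rejects n (f : vertex n -> bool) (bs : seq (vertex n) -> nat)
    (x : vertex n) (ds : seq 'I_n) : bool :=
  let p := walk x ds in
  let i := bs p in
  (f x != f (last x p)) &&
  (violating f (nth x p i) (nth x p i.+1) || violating f (nth x p i.+1) (nth x p i)).

(* Rejection probability conditioned on the chosen length being l:
   x uniform in {0,1}^n, l i.i.d. uniform step directions. *)
Definition reject_prob n (f : vertex n -> bool) (bs : seq (vertex n) -> nat) (l : nat) : rat :=
  (#|[set xd : vertex n * l.-tuple 'I_n | rejects f bs xd.1 xd.2]|%:R
     / (2 ^ n * n ^ l)%:R)%R.

(* For a violating edge (u, v) with both ends l-sticky and a time t < l, splice
   a reversed non-influential walk of length t from u, the edge (u, v), and a
   non-influential walk of length l - t - 1 from v. The resulting run crosses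
   (u, v) at time t and no other influential edge, so binary search must return
   (u, v) and the run rejects; (u, v, t) is read back from the run, so distinct
   triples give disjoint sets of runs. Stickiness, together with the fact that
   prefixes of non-influential walks are non-influential, leaves at least
   n^t / 2 and n^(l-t-1) / 2 choices for the two halves. Hence at least
   |F_l| l n^(l-1) / 4 of the 2^n n^l runs reject. *)

From mathcomp Require Import all_boot all_order all_algebra ring lra zify.
Set Implicit Arguments. Unset Strict Implicit. Unset Printing Implicit Defensive.
Import Order.TTheory GRing.Theory Num.Theory.

Lemma eq_from_steps (T : Type) (g : nat -> T) a b :
  a <= b -> (forall j, a <= j < b -> g j = g j.+1) -> g a = g b.
Proof.
move=> /subnK <-; elim: (b - a) => [|k IH] steps //.
have step_k : g (k + a) = g (k + a).+1 by apply: steps; lia.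
by rewrite addSn -step_k IH // => j /andP [aj jk]; apply: steps; lia.
Qed.

Section Walk.
Variable n : nat.
Implicit Types (x u : vertex n) (s a b : seq 'I_n).

Definition walk_at x s j := foldl (@flip n) x (take j s).

Lemma flipE x i c : flip x i c = x c (+) (c == i).
Proof. by rewrite ffunE; case: (c == i); case: (x c). Qed.

Lemma foldl_flipE x s c : foldl (@flip n) x s c = x c (+) odd (count_mem c s).
Proof.
elim: s x => [|i s IH] x /=; first by rewrite addbF.
by rewrite IH flipE oddD -addbA eq_sym; case: (i == c); case: (odd _).
Qed.

Lemma foldl_flip_rev u a : foldl (@flip n) (foldl (@flip n) u a) (rev a) = u.
Proof. by apply/ffunP => c; rewrite !foldl_flipE count_rev -addbA addbb addbF. Qed.

Lemma walk_at0 x s : walk_at x s 0 = x.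
Proof. by rewrite /walk_at take0. Qed.

Lemma walk_at_take x s t j : j <= t -> walk_at x (take t s) j = walk_at x s j.
Proof. by move=> jt; rewrite /walk_at take_takel. Qed.

Lemma nth_walk y x s j : j <= size s -> nth y (walk x s) j = walk_at x s j.
Proof.
move=> js; rewrite (set_nth_default x) ?nth_cons_scanl //.
by rewrite /= size_scanl ltnS.
Qed.

Lemma last_walk x s : last x (walk x s) = walk_at x s (size s).
Proof. by rewrite (last_nth x) /= size_scanl -/(walk x s) nth_walk. Qed.

Variable f : vertex n -> bool.

Lemma no_influentialP x s :
  reflect (forall j, j < size s -> f (walk_at x s j) = f (walk_at x s j.+1))
          (no_influential f (walk x s)).
Proof.
have size_zip_walk : size (zip (walk x s) (behead (walk x s))) = size s.
  by rewrite size_zip size_behead /= size_scanl; apply/minn_idPr.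
have nth_behead j : nth x (scanl (@flip n) x s) j = nth x (walk x s) j.+1 by [].
apply: (iffP (all_nthP (x, x))); rewrite size_zip_walk => steps j js.
  move/eqP: (steps j js); rewrite nth_zip_cond size_zip_walk js /= nth_behead.
  by rewrite !nth_walk // ltnW.
by rewrite nth_zip_cond size_zip_walk js /= nth_behead !nth_walk ?(ltnW js) // steps.
Qed.

Definition only_influential_at x s t :=
  forall j, j < size s -> j != t -> f (walk_at x s j) = f (walk_at x s j.+1).

Lemma rejects_only_violating bs x s t :
  binsearch_spec f bs -> t < size s ->
  violating f (walk_at x s t) (walk_at x s t.+1) -> only_influential_at x s t ->
  rejects f bs x s.
Proof.
move=> bsP ts viol others.
have /and3P [_ fu fv] := viol.
have f_head : f x = f (walk_at x s t).
  rewrite -{1}(walk_at0 x s).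
  apply: (eq_from_steps (g := fun j => f (walk_at x s j))) => // j /andP [_ jt].
  by apply: others; rewrite ?(ltn_trans jt) // ltn_eqF.
have f_last : f (walk_at x s t.+1) = f (last x (walk x s)).
  rewrite last_walk.
  apply: (eq_from_steps (g := fun j => f (walk_at x s j))) => // j /andP [tj js].
  by apply: others; rewrite // gtn_eqF.
have f_ends : f x != f (last x (walk x s)) by rewrite -f_last f_head fu fv.
have [bs_lt bs_infl] := bsP x (scanl (@flip n) x s) f_ends.
rewrite -/(walk x s) size_scanl in bs_lt bs_infl.
rewrite !nth_walk // in bs_infl; last exact: ltnW.
have bs_t : bs (walk x s) = t.
  by apply/eqP; apply: contraLR bs_infl => /others ->; rewrite ?eqxx.
by rewrite /rejects bs_t f_ends !nth_walk ?viol ?(ltnW ts).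
Qed.

Definition good_walks t u := [set a : t.-tuple 'I_n | no_influential f (walk u a)].

Lemma leq_card_good_walks t L u :
  t <= L -> #|good_walks L u| <= #|good_walks t u| * n ^ (L - t).
Proof.
move=> tL; have size_take_t (s : L.-tuple 'I_n) : size (take t s) == t.
  by rewrite size_takel ?size_tuple.
pose split_at (s : L.-tuple 'I_n) := (Tuple (size_take_t s), [tuple of drop t s]).
have split_inj : injective split_at.
  move=> s1 s2 [e1 e2]; apply: val_inj.
  by rewrite -[val s1](cat_take_drop t) -[val s2](cat_take_drop t) e1 e2.
have -> : n ^ (L - t) = #|[set: (L - t).-tuple 'I_n]| by rewrite cardsT card_tuple card_ord.
rewrite -cardsX -(card_imset _ split_inj).
apply/subset_leq_card/subsetP => _ /imsetP [s good_s ->].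
move: good_s; rewrite !inE andbT => /no_influentialP good_s.
apply/no_influentialP => j; rewrite size_takel ?size_tuple // => jt.
have jL : j < L := leq_trans jt tL.
by rewrite !walk_at_take ?(ltnW jt) // good_s ?size_tuple.
Qed.

Lemma sticky_card_good_walks L u :
  0 < n -> sticky f L u -> n ^ L <= 2 * #|good_walks L u|.
Proof.
move=> n_gt0; rewrite /sticky -/(good_walks L u) ler_pdivlMr ?ltr0n ?expn_gt0 ?n_gt0 //.
by rewrite -(ler_nat rat) natrM; lra.
Qed.

Lemma walk_at_glue_l u i a b j : j <= size a ->
  walk_at (foldl (@flip n) u a) (rev a ++ i :: b) j = walk_at u a (size a - j).
Proof.
move=> ja; rewrite /walk_at takel_cat ?size_rev // take_rev.
apply/ffunP => c; rewrite !foldl_flipE count_rev.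
by rewrite -{1}(cat_take_drop (size a - j) a) count_cat oddD -!addbA addbb addbF.
Qed.

Lemma walk_at_glue_r u i a b j :
  walk_at (foldl (@flip n) u a) (rev a ++ i :: b) (size a + j.+1) = walk_at (flip u i) b j.
Proof.
by rewrite /walk_at take_cat size_rev ltnNge leq_addr /= addKn foldl_cat foldl_flip_rev.
Qed.

Lemma glue_only_influential u i a b :
  no_influential f (walk u a) -> no_influential f (walk (flip u i) b) ->
  only_influential_at (foldl (@flip n) u a) (rev a ++ i :: b) (size a).
Proof.
move=> /no_influentialP good_a /no_influentialP good_b j.
rewrite size_cat size_rev /= => jab; case: (ltngtP j (size a)) => // [ja | aj] _.
  rewrite !walk_at_glue_l ?(ltnW ja) //.
  have -> : size a - j = (size a - j.+1).+1 by lia.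
  by rewrite [RHS]good_a //; lia.
have -> : j = size a + (j - (size a).+1).+1 by lia.
by rewrite -addnS !walk_at_glue_r good_b //; lia.
Qed.

End Walk.

Lemma adjacent_flip n (x y : vertex n) : adjacent x y -> exists i, y = flip x i.
Proof.
move=> /cards1P [i diff_i]; exists i; apply/ffunP => c; rewrite flipE.
have : (c \in [set j | x j != y j]) = (c == i) by rewrite diff_i inE.
by rewrite inE; case: (c == i); case: (x c); case: (y c).
Qed.

Section Gluing.
Variables (n L : nat) (t : 'I_L).

Lemma size_glue (i : 'I_n) (ab : t.-tuple 'I_n * (L - t.+1).-tuple 'I_n) :
  size (rev ab.1 ++ i :: ab.2) == L.
Proof. by rewrite size_cat size_rev /= !size_tuple addnS -addSn subnKC. Qed.

(* The run starts where the reversed walk ab.1 from u ends, so it is at u at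
   time t, crosses the edge (u, flip u i), then follows ab.2. *)
Definition glue_run (u : vertex n) (i : 'I_n) (ab : t.-tuple 'I_n * (L - t.+1).-tuple 'I_n) :
    vertex n * L.-tuple 'I_n :=
  (foldl (@flip n) u ab.1, Tuple (size_glue i ab)).

Lemma glue_run_inj u i : injective (glue_run u i).
Proof.
move=> [a b] [a' b'] [] _ /eqP; rewrite eqseq_cat ?size_rev ?size_tuple //.
by move=> /andP [/eqP /(congr1 rev)]; rewrite !revK => /val_inj -> /eqP [/val_inj ->].
Qed.

End Gluing.

Section Rejection.
Variables (n : nat) (f : vertex n -> bool) (bs : seq (vertex n) -> nat) (L : nat).
Hypotheses (n_gt0 : 0 < n) (bsP : binsearch_spec f bs).

Definition rejecting_runs := [set xd : vertex n * L.-tuple 'I_n | rejects f bs xd.1 xd.2].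

Definition edge_dir (e : vertex n * vertex n) : 'I_n :=
  odflt (Ordinal n_gt0) [pick i | e.2 == flip e.1 i].

Lemma edge_dirP e : adjacent e.1 e.2 -> e.2 = flip e.1 (edge_dir e).
Proof.
move=> /adjacent_flip [i e2]; rewrite /edge_dir.
by case: pickP => [j /eqP // | /(_ i)]; rewrite e2 eqxx.
Qed.

Definition glued_runs (e : vertex n * vertex n) (t : 'I_L) :=
  [set glue_run e.1 (edge_dir e) ab
    | ab in setX (good_walks f t e.1) (good_walks f (L - t.+1) e.2)].

Lemma glued_runsP e t xd : e \in F_set f L -> xd \in glued_runs e t ->
  [/\ walk_at xd.1 xd.2 t = e.1, walk_at xd.1 xd.2 t.+1 = e.2
    & only_influential_at f xd.1 xd.2 t].
Proof.
rewrite inE => /and4P [adj _ _ _] /imsetP [[a b] /setXP [good_a good_b] ->] /=.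
rewrite !inE (edge_dirP adj) in good_a good_b.
split.
- have := walk_at_glue_l e.1 (edge_dir e) b (leqnn (size a)).
  by rewrite subnn walk_at0 size_tuple.
- have := walk_at_glue_r e.1 (edge_dir e) a b 0.
  by rewrite walk_at0 size_tuple addn1 -(edge_dirP adj).
- by have := glue_only_influential good_a good_b; rewrite size_tuple.
Qed.

Lemma glued_runs_rejecting e t : e \in F_set f L -> glued_runs e t \subset rejecting_runs.
Proof.
move=> eF; apply/subsetP => xd xd_glued; rewrite inE.
have [at_t at_t1 others] := glued_runsP eF xd_glued.
move: eF; rewrite inE => /and4P [_ viol _ _].
by apply: (rejects_only_violating (t := t)); rewrite ?size_tuple ?at_t ?at_t1.
Qed.

Lemma glued_runs_disjoint e e' t t' : e \in F_set f L -> e' \in F_set f L ->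
  (e, t) != (e', t') -> [disjoint glued_runs e t & glued_runs e' t'].
Proof.
move=> eF e'F; apply: contraNT; rewrite -setI_eq0 => /set0Pn [xd /setIP [xd_e xd_e']].
have [u_t v_t others] := glued_runsP eF xd_e.
have [u_t' v_t' others'] := glued_runsP e'F xd_e'.
move: eF; rewrite inE => /and4P [_ /and3P [_ fu fv] _ _].
have tt' : t = t'.
  apply/val_inj/eqP; apply: contraLR fv => t_neq.
  by rewrite negbK -v_t -others' ?size_tuple // u_t.
subst t'.
by rewrite (surjective_pairing e) (surjective_pairing e') -u_t -v_t -u_t' -v_t'.
Qed.

Lemma card_glued_runs e t : e \in F_set f L -> n ^ L.-1 <= 4 * #|glued_runs e t|.
Proof.
rewrite inE => /and4P [_ _ sticky_u sticky_v].
rewrite card_in_imset => [|ab ab' _ _]; last exact: glue_run_inj.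
rewrite cardsX; set A := #|good_walks f t e.1|; set B := #|good_walks f (L - t.+1) e.2|.
have tL : t < L := ltn_ord t.
have bound_u : n ^ L <= 2 * (A * n ^ (L - t)).
  exact: leq_trans (sticky_card_good_walks n_gt0 sticky_u)
                   (leq_mul (leqnn 2) (leq_card_good_walks f e.1 (ltnW tL))).
have bound_v : n ^ L <= 2 * (B * n ^ t.+1).
  rewrite -[in n ^ t.+1](subKn tL).
  exact: leq_trans (sticky_card_good_walks n_gt0 sticky_v)
                   (leq_mul (leqnn 2) (leq_card_good_walks f e.2 (leq_subr t.+1 L))).
rewrite -(@leq_pmul2r (n ^ L.+1)) ?expn_gt0 ?n_gt0 //.
have -> : n ^ L.-1 * n ^ L.+1 = n ^ L * n ^ L by rewrite -!expnD; congr (n ^ _); lia.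
have -> : n ^ L.+1 = n ^ (L - t) * n ^ t.+1 by rewrite -expnD; congr (n ^ _); lia.
have -> : 4 * (A * B) * (n ^ (L - t) * n ^ t.+1) = 2 * (A * n ^ (L - t)) * (2 * (B * n ^ t.+1)).
  by ring.
exact: leq_mul.
Qed.

Lemma card_F_set_le_rejecting : #|F_set f L| * L * n ^ L.-1 <= 4 * #|rejecting_runs|.
Proof.
(* Emptied outside F_set so that partition_disjoint_bigcup, which ranges over
   the whole index type, applies. *)
pose runs j := if j.1 \in F_set f L then glued_runs j.1 j.2 else set0.
have runs_disjoint j j' : j != j' -> [disjoint runs j & runs j'].
  rewrite /runs -setI_eq0; case: ifP => jF; case: ifP => j'F; rewrite ?set0I ?setI0 //.
  by move=> neq; rewrite setI_eq0 glued_runs_disjoint // -!surjective_pairing.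
have card_runs : #|\bigcup_j runs j| = \sum_j #|runs j|.
  by rewrite -sum1_card partition_disjoint_bigcup //; under eq_bigr do rewrite sum1_card.
have runs_rejecting : \bigcup_j runs j \subset rejecting_runs.
  by apply/bigcupsP => j _; rewrite /runs; case: ifP => jF; rewrite ?sub0set ?glued_runs_rejecting.
have -> : #|F_set f L| * L = #|setX (F_set f L) [set: 'I_L]| by rewrite cardsX cardsT card_ord.
rewrite -sum_nat_const big_mkcond /= (@leq_trans (\sum_j 4 * #|runs j|)) //.
  apply: leq_sum => -[e t] _; rewrite /runs in_setX in_setT andbT /=.
  by case: ifP => // jF; apply: card_glued_runs.
by rewrite -big_distrr /= -card_runs leq_mul2l subset_leq_card ?orbT.
Qed.

Lemma reject_prob_ge : 0 < L ->
  (1 / 4 * (L%:R / n%:R) * (#|F_set f L|%:R / (2 ^ n)%:R) <= reject_prob f bs L :> rat)%R.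
Proof.
move=> L_gt0; rewrite /reject_prob -/rejecting_runs.
have card_le := card_F_set_le_rejecting; rewrite -(ler_nat rat) !natrM in card_le.
have n_neq0 : (n%:R != 0 :> rat)%R by rewrite pnatr_eq0 -lt0n.
have pow_neq0 m k : 0 < m -> ((m ^ k)%:R != 0 :> rat)%R.
  by move=> m_gt0; rewrite pnatr_eq0 -lt0n expn_gt0 m_gt0.
have -> : (1 / 4 * (L%:R / n%:R) * (#|F_set f L|%:R / (2 ^ n)%:R) =
           #|F_set f L|%:R * L%:R * (n ^ L.-1)%:R / 4 / (2 ^ n * n ^ L)%:R :> rat)%R.
  rewrite -(prednK L_gt0) expnS !natrM /=; field.
  by rewrite n_neq0 !pow_neq0.
by apply: ler_wpM2r; rewrite ?invr_ge0 ?ler0n //; lra.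
Qed.

End Rejection.

Theorem lemma3p5 :
  exists c : rat, (0 < c)%R /\
  forall (n : nat) (f : vertex n -> bool) (bs : seq (vertex n) -> nat) (k : nat),
    0 < n -> k <= up_log 2 n -> binsearch_spec f bs ->
    (c * ((2 ^ k)%:R / n%:R) * (#|F_set f (2 ^ k)|%:R / (2 ^ n)%:R)
       <= reject_prob f bs (2 ^ k))%R.
Proof.
(* The bound holds for every length l > 0. *)
exists (1 / 4)%R; split => // n f bs k n_gt0 _ bsP.
by apply: reject_prob_ge; rewrite ?expn_gt0.
Qed.
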